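(* Let $\mathcal{A}\subseteq C^0([0,1])$ be a subalgebra which is closed with respect to uniform convergence and contains a non-constant function, and let $x_0\in(0,1)$. Then $\mathcal{A}$ contains a non-constant function $f$ which is differentiable at $x_0$.
   Context: $C^0([0,1])$ denotes the algebra of continuous real-valued functions on $[0,1]$ with the supremum norm; the subalgebra is not assumed to contain the constants. *)

From HB Require Import structures.
From mathcomp Require Import all_boot all_order all_algebra.
From mathcomp Require Import all_classical all_reals all_analysis.
Set Implicit Arguments. Unset Strict Implicit. Unset Printing Implicit Defensive.
Import Order.TTheory GRing.Theory Num.Theory.
Import numFieldNormedType.Exports.
Local Open Scope classical_set_scope.
Local Open Scope ring_scope.

Section Defs.
Variable R : realType.

Definition I01 : set R := [set x | 0 <= x <= 1].

(* f represents an element of C^0([0,1]) (only values on [0,1] matter) *)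
Definition C01 (f : R -> R) : Prop := {within I01, continuous f}.

(* A (a set of representatives of elements of C^0([0,1])) is a real
   subalgebra; constants are not required. *)
Definition is_subalgebra (A : set (R -> R)) : Prop :=
  [/\ (forall f, A f -> C01 f),
      A (fun _ => 0),
      (forall f g, A f -> A g -> A (fun x => f x + g x)),
      (forall (c : R) f, A f -> A (fun x => c * f x)) &
      (forall f g, A f -> A g -> A (fun x => f x * g x))].

Definition unif_cvg01 (u : nat -> R -> R) (g : R -> R) : Prop :=
  forall e : R, 0 < e -> exists N : nat, forall n : nat, (N <= n)%N ->
    forall x, I01 x -> `|u n x - g x| < e.

Definition unif_closed (A : set (R -> R)) : Prop :=
  forall (u : nat -> R -> R) (g : R -> R),
    (forall n, A (u n)) -> C01 g -> unif_cvg01 u g -> A g.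

Definition nonconst01 (f : R -> R) : Prop :=
  exists x y, [/\ I01 x, I01 y & f x <> f y].

End Defs.

(* A uniformly closed subalgebra is closed under [f |-> |f|], because [|t|]
   is a uniform limit on [[-1, 1]] of polynomials without constant term (the
   iteration [p |-> p + (t^2 - p^2)/2] started at [0]).  Hence [Q + |Q|],
   twice the positive part of [Q], lies in the algebra for every member [Q].
   It therefore suffices to find [Q] in the algebra which is [<= 0] near [x0]
   but positive somewhere: then [Q + |Q|] vanishes near [x0], so it is
   differentiable there, and it is not constant.  Pick a non-constant [f] in
   the algebra and a point [z] with [f z] different from both [0] and
   [f x0].  If [f x0 <> 0], a combination [a f + b f^2] takes the values [-1]
   at [x0] and [1] at [z].  If [f x0 = 0], take [k f^2 - |f|] with
   [k = 2 / |f z|], which is [<= 0] wherever [|f| <= 1/k], in particular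
   near [x0]. *)
From HB Require Import structures.
From mathcomp Require Import all_boot all_order all_algebra.
From mathcomp Require Import all_classical all_reals all_analysis.
From mathcomp Require Import ring lra.
Set Implicit Arguments. Unset Strict Implicit. Unset Printing Implicit Defensive.
Import Order.TTheory GRing.Theory Num.Theory.
Import numFieldNormedType.Exports.
Local Open Scope classical_set_scope.
Local Open Scope ring_scope.

Section AbsApprox.
Variable R : realType.

Fixpoint abs_approx (n : nat) (t : R) : R :=
  if n is m.+1 then abs_approx m t + (t ^+ 2 - abs_approx m t ^+ 2) / 2 else 0.

Lemma onemX_bernoulli_le1 (u : R) (n : nat) : 0 <= u <= 1 ->
  (1 - u) ^+ n * (1 + n%:R * u) <= 1.
Proof.
move=> /andP[u0 u1]; elim: n => [|n IHn]; first by rewrite expr0 mul0r addr0 mulr1.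
have pow_ge0 : 0 <= (1 - u) ^+ n by apply: exprn_ge0; lra.
have step : (1 - u) * (1 + (n%:R + 1) * u) <= 1 + n%:R * u.
  have : 0 <= n%:R :> R by [].
  nra.
rewrite exprS -mulrA -natr1 mulrCA; apply: le_trans IHn.
exact: ler_wpM2l.
Qed.

Lemma abs_approx_bounds (t : R) (n : nat) : `|t| <= 1 ->
  [/\ 0 <= abs_approx n t, abs_approx n t <= `|t|
    & `|t| - abs_approx n t <= `|t| * (1 - `|t| / 2) ^+ n].
Proof.
have sqr_t : t ^+ 2 = `|t| ^+ 2 by rewrite real_normK ?num_real.
have : 0 <= `|t| by [].
move: `|t| sqr_t => s sqr_t s0 s1.
elim: n => [|n [p0 ps gap]] /=; first by rewrite expr0 mulr1 subr0 lexx.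
rewrite sqr_t.
have pow_ge0 : 0 <= (1 - s / 2) ^+ n by apply: exprn_ge0; lra.
split; [nra | nra |].
have -> : s - (abs_approx n t + (s ^+ 2 - abs_approx n t ^+ 2) / 2) =
          (s - abs_approx n t) * (1 - (s + abs_approx n t) / 2) by ring.
rewrite exprSr mulrA.
have contract : (s - abs_approx n t) * (1 - (s + abs_approx n t) / 2)
                <= (s - abs_approx n t) * (1 - s / 2) by nra.
by apply: le_trans contract _; apply: ler_wpM2r; lra.
Qed.

Lemma abs_approx_err (t : R) (n : nat) : `|t| <= 1 ->
  0 <= `|t| - abs_approx n t /\ (`|t| - abs_approx n t) * n%:R <= 2.
Proof.
move=> t1; have [p0 pt gap] := abs_approx_bounds n t1.
split; first lra.
have s0 : 0 <= `|t| by [].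
have bern : (1 - `|t| / 2) ^+ n * (1 + n%:R * (`|t| / 2)) <= 1.
  by apply: onemX_bernoulli_le1; apply/andP; split; lra.
have n0 : 0 <= n%:R :> R by [].
have : (`|t| - abs_approx n t) * n%:R <= `|t| * (1 - `|t| / 2) ^+ n * n%:R.
  exact: ler_wpM2r.
have q0 : 0 <= (1 - `|t| / 2) ^+ n by apply: exprn_ge0; lra.
nra.
Qed.

Lemma abs_approx_unif (g : R -> R) : (forall x, I01 x -> `|g x| <= 1) ->
  unif_cvg01 (fun n x => abs_approx n (g x)) (fun x => `|g x|).
Proof.
move=> g1 e e0; exists (Num.truncn (2 / e)).+1 => n Nn x Ix.
have [gap0 gapn] := abs_approx_err n (g1 x Ix).
rewrite distrC ger0_norm //.
have n_gt : 2 / e < n%:R.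
  by apply: lt_le_trans (truncnS_gt _) _; rewrite ler_nat.
have n0 : 0 < n%:R :> R by apply: le_lt_trans n_gt; rewrite divr_ge0 // ltW.
have : 2 < e * n%:R by rewrite mulrC -ltr_pdivrMr.
move: (`|g x| - _) gap0 gapn => gap gap0 gapn.
nra.
Qed.

End AbsApprox.

Section C01Facts.
Variable R : realType.
Implicit Types (f : R -> R) (c x y : R).

Lemma I01_itvoo (x : R) : 0 < x < 1 -> I01 x.
Proof. by move=> /andP[x0 x1]; apply/andP; split; apply: ltW. Qed.

Lemma C01_norm f : C01 f -> C01 (fun x => `|f x|).
Proof. by move=> cf x; apply: continuous_comp (cf x) _; exact: norm_continuous. Qed.

Lemma C01_continuous_at f (x0 : R) : C01 f -> 0 < x0 < 1 -> {for x0, continuous f}.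
Proof.
by move=> cf x0_01; apply: (@within_continuous_continuous _ _ _ 0 1).
Qed.

Lemma C01_IVT_mid f x y : C01 f -> I01 x -> I01 y ->
  exists2 z, I01 z & f z = (f x + f y) / 2.
Proof.
wlog xy : x y / x <= y.
  move=> wlog_xy cf Ix Iy; have [xy|/ltW yx] := leP x y; first exact: wlog_xy.
  by rewrite addrC; exact: wlog_xy.
move=> cf /andP[x0 x1] /andP[y0 y1].
have sub_xy : `[x, y] `<=` @I01 R.
  by move=> t; rewrite /= in_itv /= => /andP[xt ty]; apply/andP; split; lra.
have mid : Num.min (f x) (f y) <= (f x + f y) / 2 <= Num.max (f x) (f y).
  by case: (leP (f x) (f y)) => fxy; rewrite ?(minEle, maxEle) ?fxy /=; lra.
have [z zxy fz] := IVT xy (continuous_subspaceW sub_xy cf) mid.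
by exists z => //; apply: sub_xy.
Qed.

Lemma C01_nonconst_avoid f c : C01 f -> nonconst01 f ->
  exists z, [/\ I01 z, f z != 0 & f z != c].
Proof.
move=> cf [x [y [Ix Iy fxy]]].
have [[z zP] | none] := pselect (exists z, [/\ I01 z, f z != 0 & f z != c]).
  by exists z.
have two_values w : I01 w -> f w = 0 \/ f w = c.
  move=> Iw; have [|fw0] := eqVneq (f w) 0; [by left | right].
  by apply/eqP/negPn/negP => fwc; apply: none; exists w.
have [m Im fm] := C01_IVT_mid cf Ix Iy.
by move: (two_values x Ix) (two_values y Iy) (two_values m Im) fxy; rewrite fm; lra.
Qed.

End C01Facts.

Section ClosedSubalgebra.
Variables (R : realType) (A : set (R -> R)).
Implicit Types (f g Q : R -> R) (a b c z : R).
Hypothesis subA : is_subalgebra A.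

Lemma subalg_C01 f : A f -> C01 f.
Proof. by case: subA => A_C01 _ _ _ _; exact: A_C01. Qed.

Lemma subalg0 : A (fun _ => 0).
Proof. by case: subA. Qed.

Lemma subalgD f g : A f -> A g -> A (fun x => f x + g x).
Proof. by case: subA => _ _ AD _ _; exact: AD. Qed.

Lemma subalgZ c f : A f -> A (fun x => c * f x).
Proof. by case: subA => _ _ _ AZ _; exact: AZ. Qed.

Lemma subalgM f g : A f -> A g -> A (fun x => f x * g x).
Proof. by case: subA => _ _ _ _ AM; exact: AM. Qed.

Lemma subalg_abs_approx n f : A f -> A (fun x => abs_approx n (f x)).
Proof.
move=> Af; elim: n => [|n IHn]; first exact: subalg0.
have -> : (fun x => abs_approx n.+1 (f x)) = (fun x => abs_approx n (f x) +
    (2^-1 * (f x * f x) + - 2^-1 * (abs_approx n (f x) * abs_approx n (f x)))).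
  by apply: funext => x /=; ring.
by apply: subalgD => //; apply: subalgD; apply: subalgZ; apply: subalgM.
Qed.

Lemma subalg_interpolate f a b : A f -> f a != 0 -> f b != 0 -> f a != f b ->
  exists Q, [/\ A Q, Q a = -1 & Q b = 1].
Proof.
move=> Af fa0 fb0 fab.
have fba : f b - f a != 0 by rewrite subr_eq0 eq_sym.
pose be := (f a + f b) / (f a * f b * (f b - f a)).
pose al := (-1 - be * (f a * f a)) / f a.
exists (fun x => al * f x + be * (f x * f x)); split.
- by apply: subalgD; apply: subalgZ => //; apply: subalgM.
- by rewrite /al; field.
- by rewrite /al /be; field; rewrite fa0 fb0 fba.
Qed.

Hypothesis closedA : unif_closed A.

Lemma subalg_abs f : A f -> A (fun x => `|f x|).
Proof.
move=> Af; have cf := subalg_C01 Af.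
have abs_f_cont : {within `[0, 1], continuous (fun x => `|f x|)}.
  by rewrite set_itvcc; exact: C01_norm.
have [m _ max_m] := EVT_max ler01 abs_f_cont.
pose M := `|f m| + 1.
have M0 : 0 < M by rewrite /M ltr_wpDl.
have Ag : A (fun x => M^-1 * f x) by exact: subalgZ.
have g1 x : I01 x -> `|M^-1 * f x| <= 1.
  move=> Ix; rewrite normrM gtr0_norm ?invr_gt0 // ler_pdivrMl // mulr1.
  have : `|f x| <= `|f m| by apply: max_m; rewrite in_itv.
  rewrite /M; lra.
have Aabs_g : A (fun x => `|M^-1 * f x|).
  apply: (closedA (fun n => subalg_abs_approx n Ag)); last exact: abs_approx_unif.
  exact: C01_norm (subalg_C01 Ag).
have -> : (fun x => `|f x|) = (fun x => M * `|M^-1 * f x|).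
  by apply: funext => x; rewrite normrM gtr0_norm ?invr_gt0 // mulrA mulfV ?mul1r // gt_eqF.
exact: subalgZ.
Qed.

Lemma subalg_nonconst_derivable Q (x0 : R) z : A Q -> I01 x0 -> I01 z -> 0 < Q z ->
  (\forall x \near x0, Q x <= 0) ->
  exists f, [/\ A f, nonconst01 f & derivable f x0 1].
Proof.
move=> AQ Ix0 Iz Qz Q_le0.
exists (fun x => Q x + `|Q x|); split.
- exact: subalgD (subalg_abs AQ).
- exists x0, z; split => //.
  rewrite (ger0_norm (ltW Qz)) ler0_norm ?subrr; last exact: nbhs_singleton Q_le0.
  lra.
- apply: (@near_eq_derivable _ _ _ (cst 0)); last exact: derivable_cst.
  by near=> x; rewrite ler0_norm ?subrr //; near: x.
Unshelve. all: by end_near.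
Qed.

Lemma subalg_sign_root f (x0 : R) z : A f -> 0 < x0 < 1 -> f x0 = 0 -> f z != 0 ->
  exists Q, [/\ A Q, 0 < Q z & \forall x \near x0, Q x <= 0].
Proof.
move=> Af x0_01 fx0 fz0.
have fz_gt0 : 0 < `|f z| by rewrite normr_gt0.
pose k := 2 / `|f z|.
have sqr_norm (t : R) : t * t = `|t| * `|t| by rewrite -!expr2 real_normK ?num_real.
exists (fun x => k * (f x * f x) + - 1 * `|f x|); split.
- by apply: subalgD; apply: subalgZ; [apply: subalgM | apply: subalg_abs].
- rewrite sqr_norm /k; move: `|f z| fz_gt0 => a a0.
  have -> : 2 / a * (a * a) = 2 * a by field; exact: lt0r_neq0.
  lra.
have small : \forall x \near x0, `|f x - f x0| < `|f z| / 2.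
  exact: cvgr_distC_lt (C01_continuous_at (subalg_C01 Af) x0_01) _ (divr_gt0 fz_gt0 _).
apply: filterS small => x; rewrite fx0 subr0 sqr_norm => small.
have k_small : k * `|f x| <= 1 by rewrite /k mulrAC ler_pdivrMr // mul1r; lra.
have : 0 <= `|f x| by [].
move: k `|f x| k_small => kk b k_small b0.
nra.
Qed.

Lemma subalg_sign_nonroot f (x0 : R) z : A f -> 0 < x0 < 1 ->
  f x0 != 0 -> f z != 0 -> f z != f x0 ->
  exists Q, [/\ A Q, 0 < Q z & \forall x \near x0, Q x <= 0].
Proof.
move=> Af x0_01 fx0 fz0 fz_fx0.
rewrite eq_sym in fz_fx0.
have [Q [AQ Qx0 Qz]] := subalg_interpolate Af fx0 fz0 fz_fx0.
exists Q; split; [done | by rewrite Qz |].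
have Q_cont := C01_continuous_at (subalg_C01 AQ) x0_01.
have Qx0_lt0 : Q x0 < 0 by rewrite Qx0 ltrN10.
have Q_lt0 : \forall x \near x0, Q x < 0 by exact: (cvgr_lt _ Q_cont _ Qx0_lt0).
by near=> x; apply: ltW; near: x.
Unshelve. all: by end_near.
Qed.

End ClosedSubalgebra.

Theorem mainTheorem5 (R : realType) (A : set (R -> R)) (x0 : R) :
  is_subalgebra A -> unif_closed A ->
  (exists f, A f /\ nonconst01 f) ->
  0 < x0 < 1 ->
  exists f, [/\ A f, nonconst01 f & derivable f x0 1].
Proof.
move=> subA closedA [f [Af f_nc]] x0_01.
have [z [Iz fz0 fz_fx0]] := C01_nonconst_avoid (f x0) (subalg_C01 subA Af) f_nc.
have [Q [AQ Qz Q_le0]] : exists Q, [/\ A Q, 0 < Q z & \forall x \near x0, Q x <= 0].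
  have [fx0|fx0] := eqVneq (f x0) 0.
  - exact: (subalg_sign_root subA closedA Af x0_01 fx0 fz0).
  - exact: (subalg_sign_nonroot subA Af x0_01 fx0 fz0 fz_fx0).
exact: subalg_nonconst_derivable AQ (I01_itvoo x0_01) Iz Qz Q_le0.
Qed.
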